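(* Consider the two-dimensional Poisson regression model with interaction on the design region $\mathcal{X}=[0,\infty)^2$ with parameter vector $\boldsymbol{\beta}=(\beta_0,\beta_1,\beta_2,\beta_{12})^\top$, where $\beta_0\in\mathbb{R}$ is arbitrary, $\beta_1,\beta_2<0$ and $\beta_{12}=0$. Then the design which assigns equal weights $1/4$ to the four settings $\mathbf{x}_0=(0,0)$, $\mathbf{x}_1=(2/|\beta_1|,0)$, $\mathbf{x}_2=(0,2/|\beta_2|)$ and $\mathbf{x}_3=(2/|\beta_1|,2/|\beta_2|)$ is locally $D$-optimal at $\boldsymbol{\beta}$ on $\mathcal{X}$.
   Context: In the two-dimensional Poisson regression model with interaction, an observation $Y$ at setting $\mathbf{x}=(x_1,x_2)$ is Poisson distributed with mean $\lambda(\mathbf{x})=\exp(\mathbf{f}(\mathbf{x})^\top\boldsymbol{\beta})$, where $\mathbf{f}(\mathbf{x})=(1,x_1,x_2,x_1x_2)^\top$ and $\boldsymbol{\beta}=(\beta_0,\beta_1,\beta_2,\beta_{12})^\top$. An (approximate) design $\xi$ on $\mathcal{X}$ is a finite collection of mutually distinct settings $\mathbf{x}_0,\dots,\mathbf{x}_{n-1}\in\mathcal{X}$ with weights $w_i\ge 0$, $\sum_i w_i=1$. Its information matrix is $\mathbf{M}_{\boldsymbol{\beta}}(\xi)=\sum_{i=0}^{n-1} w_i\lambda(\mathbf{x}_i)\mathbf{f}(\mathbf{x}_i)\mathbf{f}(\mathbf{x}_i)^\top$. A design $\xi^*$ is locally $D$-optimal at $\boldsymbol{\beta}$ on $\mathcal{X}$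 if it maximizes $\det\mathbf{M}_{\boldsymbol{\beta}}(\xi)$ over all designs $\xi$ on $\mathcal{X}$. *)

From HB Require Import structures.
From mathcomp Require Import all_boot all_order all_algebra.
From mathcomp Require Import all_classical all_reals all_analysis.
Set Implicit Arguments. Unset Strict Implicit. Unset Printing Implicit Defensive.
Import Order.TTheory GRing.Theory Num.Theory.
Local Open Scope ring_scope.

Section Poisson.
Variable R : realType.

Definition fvec (x : R * R) : 'cV[R]_4 :=
  \col_(i < 4) [:: 1; x.1; x.2; x.1 * x.2]`_i.

Definition beta_vec (b0 b1 b2 b12 : R) : 'cV[R]_4 :=
  \col_(i < 4) [:: b0; b1; b2; b12]`_i.

Definition lam (b : 'cV[R]_4) (x : R * R) : R :=
  expR (((fvec x)^T *m b) 0 0).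

Definition infoM (b : 'cV[R]_4) (n : nat) (x : 'I_n -> R * R) (w : 'I_n -> R)
  : 'M[R]_4 :=
  \sum_(i < n) (w i * lam b (x i)) *: (fvec (x i) *m (fvec (x i))^T).

Definition is_design (X : R * R -> Prop) (n : nat) (x : 'I_n -> R * R)
  (w : 'I_n -> R) : Prop :=
  injective x /\ (forall i, X (x i)) /\ (forall i, 0 <= w i) /\
  \sum_(i < n) w i = 1.

Definition locally_D_optimal (X : R * R -> Prop) (b : 'cV[R]_4) (n : nat)
  (x : 'I_n -> R * R) (w : 'I_n -> R) : Prop :=
  is_design X x w /\
  forall (m : nat) (y : 'I_m -> R * R) (v : 'I_m -> R),
    is_design X y v -> \det (infoM b y v) <= \det (infoM b x w).

Definition quadrant (x : R * R) : Prop := 0 <= x.1 /\ 0 <= x.2.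

End Poisson.

(* Let K be the matrix with K f(x) = g(s) (x) g(t), where
   s = -b1 x1, t = -b2 x2 and g(s) = (2 - s, e s).  For every design xi on the
   quadrant, det(K)^2 det M(xi) = det(K M(xi) K^T) <= (tr(K M(xi) K^T) / 4)^4
   by Hadamard's inequality and AM-GM, and the trace is a weighted mean of
   lambda(x) |K f(x)|^2 = e^b0 h(s) h(t) with h(s) = e^-s ((2 - s)^2 + e^2 s^2),
   which is at most 4.  Hence det(K)^2 det M(xi) <= (4 e^b0)^4, with equality
   for the four-point design, for which K M K^T = 4 e^b0 I. *)

From HB Require Import structures.
From mathcomp Require Import all_boot all_order all_algebra.
From mathcomp Require Import all_classical all_reals all_analysis.
From mathcomp Require Import ring lra.
Import Order.TTheory GRing.Theory Num.Theory.
Set Implicit Arguments. Unset Strict Implicit. Unset Printing Implicit Defensive.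
Local Open Scope ring_scope.

Section Gram.
Variables (R : realFieldType) (m : nat) (c : 'I_m -> R).
Hypothesis c_ge0 : forall i, 0 <= c i.

Definition gram n (u : 'I_m -> 'cV[R]_n) : 'M[R]_n :=
  \sum_(i < m) c i *: (u i *m (u i)^T).

Lemma gramE n (u : 'I_m -> 'cV[R]_n) j k :
  gram u j k = \sum_(i < m) c i * (u i j 0 * u i k 0).
Proof.
rewrite /gram summxE; apply: eq_bigr => i _.
by rewrite !mxE big_ord1 !mxE.
Qed.

Lemma gram_sym n (u : 'I_m -> 'cV[R]_n) j k : gram u j k = gram u k j.
Proof. by rewrite !gramE; apply: eq_bigr => i _; rewrite [u i j 0 * _]mulrC. Qed.

Lemma gram_diag_ge0 n (u : 'I_m -> 'cV[R]_n) j : 0 <= gram u j j.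
Proof. by rewrite gramE sumr_ge0 // => i _; rewrite mulr_ge0 // -expr2 sqr_ge0. Qed.

Lemma mulmx_gram n (u : 'I_m -> 'cV[R]_n) (E : 'M[R]_n) :
  E *m gram u *m E^T = gram (fun i => E *m u i).
Proof.
rewrite /gram mulmx_sumr mulmx_suml; apply: eq_bigr => i _.
by rewrite -scalemxAr -scalemxAl trmx_mul !mulmxA.
Qed.

Lemma row'_col'_gram n (u : 'I_m -> 'cV[R]_n.+1) j0 :
  row' j0 (col' j0 (gram u)) = gram (fun i => row' j0 (u i)).
Proof. by apply/matrixP => j k; rewrite !mxE !gramE; apply: eq_bigr => i _; rewrite !mxE. Qed.

Lemma mxtrace_gram n (u : 'I_m -> 'cV[R]_n) :
  \tr (gram u) = \sum_(i < m) c i * \sum_(j < n) u i j 0 ^+ 2.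
Proof.
rewrite /mxtrace (eq_bigr _ (fun j _ => gramE u j j)) exchange_big /=.
by apply: eq_bigr => i _; rewrite mulr_sumr; apply: eq_bigr => j _; rewrite expr2.
Qed.

Lemma gram_diag_eq0 n (u : 'I_m -> 'cV[R]_n) j k : gram u j j = 0 -> gram u j k = 0.
Proof.
have sq_ge0 i : 0 <= c i * (u i j 0 * u i j 0) by rewrite mulr_ge0 // -expr2 sqr_ge0.
rewrite !gramE => /(psumr_eq0P (fun i _ => sq_ge0 i)) Gjj0; rewrite big1 // => i _.
move/eqP: (Gjj0 i isT).
by rewrite !mulf_eq0 orbb => /orP[] /eqP->; rewrite ?mul0r ?mulr0.
Qed.

Lemma det_shear n (w : 'cV[R]_n.+1) : w ord0 0 = 0 ->
  \det (1%:M - w *m delta_mx 0 ord0) = 1.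
Proof.
set E := _ - _ => w0.
have Ejk j k : E j k = (j == k)%:R - w j 0 * (k == ord0)%:R.
  by rewrite !mxE big_ord1 !mxE eqxx.
rewrite det_trig; last first.
  apply/is_trig_mxP => j k jk; rewrite Ejk.
  have /negbTE-> : j != k by rewrite neq_ltn jk.
  have /negbTE-> : k != ord0 by rewrite -val_eqE -lt0n (leq_ltn_trans _ jk).
  by rewrite mulr0 subr0.
rewrite big1 // => j _; rewrite Ejk eqxx.
by case: (eqVneq j ord0) => [->|_]; rewrite ?w0 ?mul0r ?mulr0 subr0.
Qed.

(* Subtracting multiples of the first coordinate from the others makes the
   first row of the Gram matrix vanish off the diagonal and turns the remaining
   diagonal entries into Schur complements. *)
Lemma gram_shear n (u : 'I_m -> 'cV[R]_n.+1) : 0 < gram u ord0 ord0 ->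
  exists v : 'I_m -> 'cV[R]_n.+1,
  [/\ \det (gram v) = \det (gram u), gram v ord0 ord0 = gram u ord0 ord0,
      forall j, gram v ord0 (lift ord0 j) = 0
    & forall j, gram v (lift ord0 j) (lift ord0 j) <= gram u (lift ord0 j) (lift ord0 j)].
Proof.
set G := gram u; set a := G ord0 ord0 => a_gt0.
have a_neq0 : a != 0 by rewrite gt_eqF.
pose w : 'cV[R]_n.+1 := \col_j (if j == ord0 then 0 else G j ord0 / a).
pose E : 'M[R]_n.+1 := 1%:M - w *m delta_mx 0 ord0.
have w0 : w ord0 0 = 0 by rewrite mxE eqxx.
have wl j : w (lift ord0 j) 0 = G (lift ord0 j) ord0 / a by rewrite mxE.
have vE i j : (E *m u i) j 0 = u i j 0 - w j 0 * u i ord0 0.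
  by rewrite mulmxBl mul1mx -mulmxA -rowE !mxE big_ord1 !mxE.
exists (fun i => E *m u i); split.
- by rewrite -mulmx_gram !det_mulmx det_tr det_shear // mul1r mulr1.
- by rewrite /a /G !gramE; apply: eq_bigr => i _; rewrite vE w0 mul0r subr0.
- move=> j; have -> : gram (fun i => E *m u i) ord0 (lift ord0 j) =
                      G ord0 (lift ord0 j) - w (lift ord0 j) 0 * a.
    rewrite /a /G !gramE mulr_sumr -sumrB; apply: eq_bigr => i _.
    by rewrite !vE w0; ring.
  by rewrite wl gram_sym divfK // subrr.
- move=> j; have -> : gram (fun i => E *m u i) (lift ord0 j) (lift ord0 j) =
                      G (lift ord0 j) (lift ord0 j) - G (lift ord0 j) ord0 ^+ 2 / a.
    have -> : G (lift ord0 j) ord0 ^+ 2 / a =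
              2 * w (lift ord0 j) 0 * G (lift ord0 j) ord0 - w (lift ord0 j) 0 ^+ 2 * a.
      by rewrite wl; field.
    rewrite /a /G !gramE !mulr_sumr -!sumrB; apply: eq_bigr => i _.
    by rewrite !vE; ring.
  by rewrite lerBlDr lerDl divr_ge0 ?sqr_ge0 ?ltW.
Qed.

Lemma det_gram_le_prod_diag n (u : 'I_m -> 'cV[R]_n) :
  \det (gram u) <= \prod_(j < n) gram u j j.
Proof.
elim: n u => [|n IHn] u; first by rewrite det_mx00 big_ord0.
have [a0 | a_neq0] := eqVneq (gram u ord0 ord0) 0; last first.
  have a_gt0 : 0 < gram u ord0 ord0 by rewrite lt0r a_neq0 gram_diag_ge0.
  have [v [detv v00 v0l vll]] := gram_shear a_gt0.
  rewrite -detv (expand_det_row _ ord0) [\sum_(j < n.+1) _]big_ord_recl.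
  rewrite big1 ?addr0; last first.
    by move=> j _; rewrite v0l mul0r.
  rewrite big_ord_recl v00 ler_wpM2l ?gram_diag_ge0 //.
  rewrite /cofactor /= expr0 mul1r row'_col'_gram (le_trans (IHn _)) //.
  apply: ler_prod => j _; rewrite gram_diag_ge0 -row'_col'_gram !mxE /=.
  exact: vll.
rewrite (expand_det_row _ ord0) big1 => [|j _]; last by rewrite gram_diag_eq0 ?mul0r.
by rewrite prodr_ge0 // => j _; apply: gram_diag_ge0.
Qed.

Lemma det_gram_le_mxtrace n (u : 'I_m -> 'cV[R]_n) :
  \det (gram u) <= (\tr (gram u) / n%:R) ^+ n.
Proof.
apply: le_trans (det_gram_le_prod_diag u) _.
have AGM := @leif_AGM _ _ predT (fun j => gram u j j) (fun j _ => gram_diag_ge0 u j).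
by rewrite cardT size_enum_ord in AGM; apply: AGM.
Qed.
End Gram.

Section ExpBounds.
Variable R : realType.

Lemma expR_ge_pow (x : R) n : - n.+1%:R <= x -> (1 + x / n.+1%:R) ^+ n.+1 <= expR x.
Proof.
move=> x_ge; have n_gt0 : 0 < n.+1%:R :> R by rewrite ltr0n.
rewrite -[x in expR x](divfK (lt0r_neq0 n_gt0)) expRM_natr.
rewrite lerXn2r ?nnegrE ?expR_ge0 ?expR_ge1Dx //.
by rewrite -(ler_pM2r n_gt0) mul0r mulrDl mul1r divfK ?lt0r_neq0 //; lra.
Qed.

Lemma expR1_ge : 5 / 2 <= expR 1 :> R.
Proof.
have eight : 7.+1%:R = 8 :> R by [].
by apply: le_trans (expR_ge_pow (n := 7) _); rewrite eight; [nra | lra].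
Qed.

Lemma expR1_le : expR 1 <= 4 :> R.
Proof.
have e_inv : expR (-1) * expR 1 = 1 :> R by rewrite -expRD addNr expR0.
have : 1 / 4 <= expR (-1) :> R.
  have two : 1.+1%:R = 2 :> R by [].
  by apply: le_trans (expR_ge_pow (n := 1) _); rewrite two; lra.
have := expR_gt0 (1 : R); nra.
Qed.

(* Equality holds at s = 0 and s = 2, the coordinates of the optimal design.
   For s >= 1/2 write s = u + 2: then expR s >= e^2 (1 + u/4)^4 and the slack is
   u^2 times a quadratic in u that is positive because e^2 >= 25/4. *)
Lemma sensitivity1_le (s : R) : 0 <= s -> (2 - s) ^+ 2 + expR 1 ^+ 2 * s ^+ 2 <= 4 * expR s.
Proof.
move=> s_ge0; have e_ge := expR1_ge; have e_le := expR1_le.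
have e2_ge : 25 / 4 <= expR 1 ^+ 2 :> R by nra.
have e2_le : expR 1 ^+ 2 <= 16 :> R by have := expR_gt0 (1 : R); nra.
have [s_small | s_large] := lerP s (1 / 2).
  have : (1 + s / 4) ^+ 4 <= expR s by apply: (expR_ge_pow (n := 3)); lra.
  nra.
set u := s - 2; have u_ge : - (3 / 2) <= u by rewrite /u; lra.
have -> : expR s = expR 1 ^+ 2 * expR u by rewrite expr2 -!expRD /u; congr expR; lra.
have exp_u : (1 + u / 4) ^+ 4 <= expR u by apply: (expR_ge_pow (n := 3)); lra.
have taylor_u : 41 / 256 <= 1 / 2 + u / 4 + u ^+ 2 / 64 by nra.
have rem_ge0 : 0 <= u ^+ 2 * (expR 1 ^+ 2 * (1 / 2 + u / 4 + u ^+ 2 / 64) - 1).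
  by rewrite mulr_ge0 ?sqr_ge0 //; nra.
have -> : s = u + 2 by rewrite /u; lra.
apply: le_trans (_ : 4 * (expR 1 ^+ 2 * (1 + u / 4) ^+ 4) <= _); last first.
  by rewrite ler_wpM2l // ler_wpM2l // sqr_ge0.
have -> : (2 - (u + 2)) ^+ 2 + expR 1 ^+ 2 * (u + 2) ^+ 2 =
  4 * (expR 1 ^+ 2 * (1 + u / 4) ^+ 4)
  - u ^+ 2 * (expR 1 ^+ 2 * (1 / 2 + u / 4 + u ^+ 2 / 64) - 1) by field.
lra.
Qed.

End ExpBounds.

Section PoissonInteraction.
Variable R : realType.

Definition kvec (E s t : R) : 'cV[R]_4 :=
  \col_(i < 4) [:: (2 - s) * (2 - t); (2 - s) * (E * t); (E * s) * (2 - t);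
                   (E * s) * (E * t)]`_i.

(* [Kmx (expR 1) b1 b2] maps [fvec x] to [g(s) (x) g(t)] with [s = - b1 x.1],
   [t = - b2 x.2] and [g(s) = (2 - s, e s)]; this is the basis in which the
   information matrix of the optimal design becomes scalar. *)
Definition Kmx (E b1 b2 : R) : 'M[R]_4 :=
  \matrix_(i < 4, j < 4) (nth [::] [:: [:: 4; 2 * b1; 2 * b2; b1 * b2];
     [:: 0; 0; - (2 * E * b2); - (E * b1 * b2)];
     [:: 0; - (2 * E * b1); 0; - (E * b1 * b2)];
     [:: 0; 0; 0; E ^+ 2 * b1 * b2]] i)`_j.

Lemma Kmx_fvec E b1 b2 (x : R * R) :
  Kmx E b1 b2 *m fvec x = kvec E (- (b1 * x.1)) (- (b2 * x.2)).
Proof.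
apply/matrixP => i j; rewrite (ord1 j) !mxE !big_ord_recl big_ord0 !mxE.
by case: i => [[|[|[|[|i]]]] Hi] //=; ring.
Qed.

Lemma sum_sqr_kvec E s t : \sum_(j < 4) kvec E s t j 0 ^+ 2 =
  ((2 - s) ^+ 2 + E ^+ 2 * s ^+ 2) * ((2 - t) ^+ 2 + E ^+ 2 * t ^+ 2).
Proof. by rewrite !big_ord_recl big_ord0 !mxE /=; ring. Qed.

Lemma lam_beta_vec b0 b1 b2 (x : R * R) :
  lam (beta_vec b0 b1 b2 0) x = expR b0 * expR (b1 * x.1) * expR (b2 * x.2).
Proof.
rewrite /lam !mxE !big_ord_recl big_ord0 !mxE /= -!expRD.
by congr expR; ring.
Qed.

Lemma sensitivity_kvec_le (s t : R) : 0 <= s -> 0 <= t ->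
  expR (- s) * expR (- t) * \sum_(j < 4) kvec (expR 1) s t j 0 ^+ 2 <= 16.
Proof.
have factor_le (r : R) : 0 <= r -> 0 <= expR (- r) * ((2 - r) ^+ 2 + expR 1 ^+ 2 * r ^+ 2) <= 4.
  move=> r_ge0; rewrite mulr_ge0 ?expR_ge0 ?addr_ge0 ?sqr_ge0 ?mulr_ge0 ?sqr_ge0 //=.
  rewrite -[4](mulKf (lt0r_neq0 (expR_gt0 r))) expRN ler_wpM2l ?invr_ge0 ?expR_ge0 //.
  by rewrite [expR r * 4]mulrC sensitivity1_le.
move=> /factor_le /andP[s1 s2] /factor_le /andP[t1 t2].
rewrite sum_sqr_kvec mulrACA.
by apply: le_trans (ler_pM s1 t1 s2 t2) _; lra.
Qed.

Lemma det_infoM_le (b0 b1 b2 : R) m (y : 'I_m -> R * R) (v : 'I_m -> R) :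
  b1 <= 0 -> b2 <= 0 -> is_design (@quadrant R) y v ->
  \det (Kmx (expR 1) b1 b2) ^+ 2 * \det (infoM (beta_vec b0 b1 b2 0) y v)
  <= (4 * expR b0) ^+ 4.
Proof.
move=> b1_le0 b2_le0 [_ [y_in [v_ge0 v_sum1]]].
set K := Kmx _ _ _; set b := beta_vec _ _ _ _.
pose c i := v i * lam b (y i).
have c_ge0 i : 0 <= c i by rewrite mulr_ge0 ?expR_ge0.
have -> : \det K ^+ 2 * \det (infoM b y v) = \det (gram c (fun i => K *m fvec (y i))).
  by rewrite -mulmx_gram !det_mulmx det_tr; ring.
apply: le_trans (det_gram_le_mxtrace c_ge0 _) _.
have tr_le : \tr (gram c (fun i => K *m fvec (y i))) <= 16 * expR b0.
  apply: (@le_trans _ _ (\sum_(i < m) v i * (16 * expR b0))).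
    rewrite mxtrace_gram ler_sum // => i _.
    rewrite -mulrA ler_wpM2l // Kmx_fvec lam_beta_vec -!mulrA [16 * _]mulrC.
    rewrite ler_wpM2l ?expR_ge0 // mulrA.
    have [x1_ge0 x2_ge0] := y_in i.
    have := @sensitivity_kvec_le (- (b1 * (y i).1)) (- (b2 * (y i).2)).
    by rewrite !opprK; apply; nra.
  by rewrite -mulr_suml v_sum1 mul1r.
rewrite lerXn2r ?nnegrE ?mulr_ge0 ?expR_ge0 ?divr_ge0 //; last first.
  by rewrite ler_pdivrMr //; lra.
rewrite mxtrace_gram sumr_ge0 // => i _.
by rewrite mulr_ge0 // sumr_ge0 // => j _; rewrite sqr_ge0.
Qed.

Definition opt_points (b1 b2 : R) : 'I_4 -> R * R :=
  fun i => [:: (0, 0); (2 / `|b1|, 0); (0, 2 / `|b2|); (2 / `|b1|, 2 / `|b2|)]`_i.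

Lemma is_design_opt (b1 b2 : R) : b1 < 0 -> b2 < 0 ->
  is_design (@quadrant R) (opt_points b1 b2) (fun _ => 1 / 4).
Proof.
move=> b1_lt0 b2_lt0.
have p1 : 0 < 2 / `|b1| by rewrite divr_gt0 // normr_gt0 lt_eqF.
have p2 : 0 < 2 / `|b2| by rewrite divr_gt0 // normr_gt0 lt_eqF.
split; last split; last split.
- move=> [[|[|[|[|i]]]] Hi] // [[|[|[|[|j]]]] Hj] //= eq_ij;
    first [exact: val_inj | case: eq_ij => *; exfalso; lra].
- by move=> [[|[|[|[|i]]]] Hi] //=; split; rewrite /= ?lexx ?ltW.
- by move=> _; lra.
- by rewrite !big_ord_recl big_ord0; field.
Qed.

Lemma Kmx_infoM_opt (b0 b1 b2 : R) : b1 < 0 -> b2 < 0 ->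
  Kmx (expR 1) b1 b2 *m infoM (beta_vec b0 b1 b2 0) (opt_points b1 b2) (fun _ => 1 / 4)
    *m (Kmx (expR 1) b1 b2)^T = (4 * expR b0)%:M.
Proof.
move=> b1_lt0 b2_lt0; rewrite [infoM _ _ _]/= mulmx_gram.
have x1 : b1 * (2 / `|b1|) = -2 by rewrite ltr0_norm //; field; rewrite lt_eqF.
have x2 : b2 * (2 / `|b2|) = -2 by rewrite ltr0_norm //; field; rewrite lt_eqF.
have e_neq0 : expR 1 != 0 :> R by rewrite gt_eqF ?expR_gt0.
have em2 : expR (-2) = (expR 1 ^+ 2)^-1 :> R by rewrite expRN expr2 -expRD.
apply/matrixP => j k; rewrite gramE !big_ord_recl big_ord0 /=.
rewrite !Kmx_fvec !lam_beta_vec /= !mulr0 !oppr0 x1 x2 !opprK !expR0 em2 !mxE.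
case: j => [[|[|[|[|j]]]] Hj] //; case: k => [[|[|[|[|k]]]] Hk] //=;
  by rewrite -?val_eqE /= ?mulr1n ?mulr0n; field; rewrite ?expf_neq0 ?e_neq0.
Qed.

End PoissonInteraction.

Theorem theorem1 (R : realType) (b0 b1 b2 : R) (hb1 : b1 < 0) (hb2 : b2 < 0) :
  locally_D_optimal (@quadrant R) (beta_vec b0 b1 b2 0)
    (fun i : 'I_4 => [:: (0, 0); (2 / `|b1|, 0); (0, 2 / `|b2|);
                        (2 / `|b1|, 2 / `|b2|)]`_i)
    (fun _ : 'I_4 => 1 / 4).
Proof.
split; first exact: is_design_opt.
move=> m y v design_yv.
set K := Kmx (expR 1) b1 b2.
have det_opt : \det K ^+ 2 * \det (infoM (beta_vec b0 b1 b2 0) (opt_points b1 b2)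
                 (fun _ => 1 / 4)) = (4 * expR b0) ^+ 4.
  have := congr1 determinant (Kmx_infoM_opt b0 hb1 hb2).
  by rewrite !det_mulmx det_tr det_scalar => <-; ring.
have detK2_gt0 : 0 < \det K ^+ 2.
  rewrite lt0r sqr_ge0 andbT; apply: contra_eqN det_opt => /eqP->.
  by rewrite mul0r eq_sym expf_neq0 // mulf_neq0 // gt_eqF ?expR_gt0.
rewrite -(ler_pM2l detK2_gt0) det_opt.
exact: det_infoM_le (ltW hb1) (ltW hb2) design_yv.
Qed.
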